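(* Assume $\kappa\ge\|f'\|_{C[-\beta,\beta]}$, $\|\phi^0\|_\infty\le\beta$ and $\tau_1<(\kappa m\Gamma(2-\alpha))^{-1/\alpha}$, and let $\{(\phi^n,R^n)\}$ be generated by the $L1$-sESAV scheme. Then for every $k\ge1$, $$\mathcal E_h[\phi^k,R^k]-\mathcal E_h[\phi^{k-1},R^{k-1}]\le-\frac{\varepsilon^2}{2}\|\nabla_h(\phi^k-\phi^{k-1})\|^2-\frac1m\langle\mathbb D^\alpha_\tau\phi^k,\nabla_\tau\phi^k\rangle.$$
   Context: Setting: $\Omega=(0,L)^2$ with periodic boundary conditions; constants $m>0$, $\varepsilon>0$, $\alpha\in(0,1)$. The nonlinearity $f=-F'$ is one of: (double-well) $F(\phi)=\frac14(1-\phi^2)^2$, $f(\phi)=\phi-\phi^3$, with $\beta=1$; or (Flory–Huggins) $F(\phi)=\frac{\theta}{2}[(1+\phi)\ln(1+\phi)+(1-\phi)\ln(1-\phi)]-\frac{\theta_c}{2}\phi^2$, $f(\phi)=\frac{\theta}{2}\ln\frac{1-\phi}{1+\phi}+\theta_c\phi$ on $(-1,1)$, with $\theta_c>\theta>0$ and $\beta\in(0,1)$ the positive root of $f$. In both cases $f(\pm\beta)=0$. Spatial discretization: $M\in\mathbb N$, $h=L/M$; $\mathbb V_h$ is the space of real grid functions $v=\{v_{ij}\}_{i,j\in\mathbb Z}$ that are $M$-periodic in each index; $\langle v,w\rangle=h^2\sum_{i,j=1}^Mv_{ij}w_{ij}$, $\|v\|=\sqrt{\langle v,v\rangle}$, $\|v\|_\infty=\max_{1\le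 i,j\le M}|v_{ij}|$, $\mathbb V_\beta=\{v\in\mathbb V_h:\|v\|_\infty\le\beta\}$; $\Delta_hv_{ij}=h^{-2}(v_{i+1,j}+v_{i-1,j}+v_{i,j+1}+v_{i,j-1}-4v_{ij})$; $\nabla_hv_{ij}=\big(\frac{v_{i+1,j}-v_{ij}}h,\frac{v_{i,j+1}-v_{ij}}h\big)$ and $\|\nabla_hv\|^2=h^2\sum_{i,j=1}^M|\nabla_hv_{ij}|^2$. Scalar functions act on grid functions pointwise. $E_{1h}[v]=\langle F(v),1\rangle$ and $g_h(v,w)=\exp(w)/\exp(E_{1h}[v])$ for $v\in\mathbb V_h$ (with $\|v\|_\infty<1$ in the Flory–Huggins case) and $w\in\mathbb R$. The discrete modified energy is $\mathcal E_h[\phi,R]=\frac{\varepsilon^2}{2}\|\nabla_h\phi\|^2+R$. Auxiliary functional: $V:\mathbb R\to\mathbb R$ satisfies (A1) $V\in C^1(\mathbb R)\cap W^{2,\infty}(\mathbb R)$, $V(1)=1$, $V'(1)=0$, $|V'|\le K_1$; (A2) $0\le V\le K_2$ for a constant $K_2>0$; (A3) $|z_1-1|\le|z_2-1|$ implies $|V(z_1)-1|\le|V(z_2)-1|$. Time grid: $0=t_0<t_1<\dots<t_N=T$, $\tau_k=t_k-t_{k-1}$, $r_k=\tau_k/\tau_{k-1}$ ($k\ge2$), $\nabla_\tau v^k=v^k-v^{k-1}$, $\mathbb D_\tau v^k=\nabla_\tau v^k/\tau_k$, $\omega_\mu(t)=t^{\mu-1}/\Gamma(\mu)$. Constant $\kappa\ge0$;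 data $\phi^0\in\mathbb V_h$, $R^0\in\mathbb R$. For $n\ge2$ the predicted solution is $\hat\phi^n=\min\{\max\{(1+r_n)\phi^{n-1}-r_n\phi^{n-2},-\beta\},\beta\}$ (pointwise). $L1$-sESAV scheme: $A^{(n)}_{n-k}=\frac1{\tau_k}\int_{t_{k-1}}^{t_k}\omega_{1-\alpha}(t_n-s)\,ds$ and $\mathbb D^\alpha_\tau v^n=\sum_{k=1}^nA^{(n)}_{n-k}\nabla_\tau v^k$. For $n=1$, $\hat\phi^1\in\mathbb V_\beta$ is the solution of the nonlinear first-step equation $A^{(1)}_0(\hat\phi^1-\phi^0)=m(\varepsilon^2\Delta_h\hat\phi^1+f(\hat\phi^1))$. For $n\ge1$, with $V^n:=V(g_h(\hat\phi^n,R^{n-1}))$, $(\phi^n,R^n)$ is defined by $\mathbb D^\alpha_\tau\phi^n=m(\varepsilon^2\Delta_h\phi^n+V^nf(\hat\phi^n)-\kappa V^n(\phi^n-\hat\phi^n))$ and $\mathbb D_\tau R^n=V^n\langle-f(\hat\phi^n)+\kappa(\phi^n-\hat\phi^n),\mathbb D_\tau\phi^n\rangle$. *)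

From Stdlib Require Import Reals ZArith.
From Coquelicot Require Import Coquelicot.
Open Scope R_scope.

Inductive model : Type :=
  | DoubleWell
  | FloryHuggins (theta thetac : R).

Definition model_ok (md : model) : Prop :=
  match md with
  | DoubleWell => True
  | FloryHuggins theta thetac => 0 < theta < thetac
  end.

Definition Fpot (md : model) (x : R) : R :=
  match md with
  | DoubleWell => / 4 * (1 - x ^ 2) ^ 2
  | FloryHuggins theta thetac =>
      theta / 2 * ((1 + x) * ln (1 + x) + (1 - x) * ln (1 - x))
      - thetac / 2 * x ^ 2
  end.

(* f = - F' *)
Definition fnl (md : model) (x : R) : R :=
  match md with
  | DoubleWell => x - x ^ 3
  | FloryHuggins theta thetac =>
      theta / 2 * ln ((1 - x) / (1 + x)) + thetac * x
  end.

Definition is_beta (md : model) (beta : R) : Prop :=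
  match md with
  | DoubleWell => beta = 1
  | FloryHuggins _ _ => 0 < beta < 1 /\ fnl md beta = 0
  end.

Definition aux_ok (V : R -> R) (K1 K2 : R) : Prop :=
  (* (A1): V in C^1 cap W^{2,oo}  (V' Lipschitz), V(1)=1, V'(1)=0, |V'| <= K1 *)
  (forall x, ex_derive V x) /\
  (forall x, continuous (Derive V) x) /\
  (exists K, forall x y, Rabs (Derive V x - Derive V y) <= K * Rabs (x - y)) /\
  V 1 = 1 /\ Derive V 1 = 0 /\
  (forall x, Rabs (Derive V x) <= K1) /\
  0 < K2 /\ (forall x, 0 <= V x <= K2) /\
  (forall z1 z2, Rabs (z1 - 1) <= Rabs (z2 - 1) -> Rabs (V z1 - 1) <= Rabs (V z2 - 1)).

(* A grid function is a map Z x Z -> R; V_h = the M-periodic ones. *)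
Definition grid := Z -> Z -> R.

Definition periodic (M : nat) (v : grid) : Prop :=
  forall i j : Z, v (i + Z.of_nat M)%Z j = v i j /\ v i (j + Z.of_nat M)%Z = v i j.

Fixpoint sum1 (n : nat) (g : nat -> R) : R :=
  match n with
  | O => 0
  | S k => sum1 k g + g (S k)
  end.

Definition gsum (M : nat) (g : grid) : R :=
  sum1 M (fun i => sum1 M (fun j => g (Z.of_nat i) (Z.of_nat j))).

Definition ginner (h : R) (M : nat) (v w : grid) : R :=
  h ^ 2 * gsum M (fun i j => v i j * w i j).

Definition gnorm (h : R) (M : nat) (v : grid) : R := sqrt (ginner h M v v).

Definition in_Vbeta (M : nat) (b : R) (v : grid) : Prop :=
  forall i j : nat, (1 <= i <= M)%nat -> (1 <= j <= M)%nat ->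
    Rabs (v (Z.of_nat i) (Z.of_nat j)) <= b.

Definition lap_h (h : R) (v : grid) : grid := fun i j =>
  (v (i + 1)%Z j + v (i - 1)%Z j + v i (j + 1)%Z + v i (j - 1)%Z - 4 * v i j) / h ^ 2.

Definition grad_norm2 (h : R) (M : nat) (v : grid) : R :=
  h ^ 2 * gsum M (fun i j =>
    ((v (i + 1)%Z j - v i j) / h) ^ 2 + ((v i (j + 1)%Z - v i j) / h) ^ 2).

Definition gmap (F : R -> R) (v : grid) : grid := fun i j => F (v i j).
Definition gsub (v w : grid) : grid := fun i j => v i j - w i j.
Definition gconst (c : R) : grid := fun _ _ => c.

Definition E1h (md : model) (h : R) (M : nat) (v : grid) : R :=
  ginner h M (gmap (Fpot md) v) (gconst 1).

Definition g_h (md : model) (h : R) (M : nat) (v : grid) (w : R) : R :=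
  exp w / exp (E1h md h M v).

Definition Eh (eps h : R) (M : nat) (phi : grid) (Rv : R) : R :=
  eps ^ 2 / 2 * grad_norm2 h M phi + Rv.

Definition Gamma (mu : R) : R :=
  RInt_gen (fun t => Rpower t (mu - 1) * exp (- t)) (at_right 0) (Rbar_locally p_infty).

Definition omega (mu t : R) : R := Rpower t (mu - 1) / Gamma mu.

Definition tau (t : nat -> R) (k : nat) : R := t k - t (k - 1)%nat.

(* A^{(n)}_{n-k} = 1/tau_k int_{t_{k-1}}^{t_k} omega_{1-alpha}(t_n - s) ds
   (an improper integral when k = n). *)
Definition Acoef (alpha : R) (t : nat -> R) (n k : nat) : R :=
  / tau t k * RInt_gen (fun s => omega (1 - alpha) (t n - s))
                       (at_right (t (k - 1)%nat)) (at_left (t k)).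

Definition DL1 (alpha : R) (t : nat -> R) (v : nat -> grid) (n : nat) : grid :=
  fun i j => sum1 n (fun k => Acoef alpha t n k * (v k i j - v (k - 1)%nat i j)).

Definition nabla_tau (v : nat -> grid) (n : nat) : grid := gsub (v n) (v (n - 1)%nat).

Definition predict (beta : R) (t : nat -> R) (phi : nat -> grid) (n : nat) : grid :=
  fun i j =>
    let r := tau t n / tau t (n - 1)%nat in
    Rmin (Rmax ((1 + r) * phi (n - 1)%nat i j - r * phi (n - 2)%nat i j) (- beta)) beta.

(* The scheme is built so that the update of the auxiliary variable R exactly
   cancels the nonlinear terms: pairing the phi-equation with nabla_tau phi^k
   expresses R^k - R^{k-1} through the discrete Laplacian and the L1 derivative.
   Summation by parts on the periodic grid turns the Laplacian term into
   -eps^2 <grad_h phi^k, grad_h (phi^k - phi^{k-1})>, and the polarization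
   identity 2<a, a - b> = |a|^2 - |b|^2 + |a - b|^2 then yields the energy
   identity, which is the claimed inequality with equality. *)
From Stdlib Require Import Reals ZArith Lia Lra.
From Coquelicot Require Import Coquelicot.
Open Scope R_scope.

Lemma sum1_ext n f g : (forall i, f i = g i) -> sum1 n f = sum1 n g.
Proof. intros H; induction n; simpl; [reflexivity | rewrite IHn, H; reflexivity]. Qed.

Lemma sum1_add n f g : sum1 n (fun i => f i + g i) = sum1 n f + sum1 n g.
Proof. induction n; simpl; [lra | rewrite IHn; lra]. Qed.

Lemma sum1_scal n c f : sum1 n (fun i => c * f i) = c * sum1 n f.
Proof. induction n; simpl; [lra | rewrite IHn; lra]. Qed.

Lemma sum1_shift n f : sum1 n (fun i => f (S i)) = sum1 n f - f 1%nat + f (S n).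
Proof. induction n; simpl; [lra | rewrite IHn; lra]. Qed.

Lemma gsum_ext M f g : (forall i j, f i j = g i j) -> gsum M f = gsum M g.
Proof. intros H; apply sum1_ext; intro; apply sum1_ext; intro; apply H. Qed.

Lemma gsum_add M f g : gsum M (fun i j => f i j + g i j) = gsum M f + gsum M g.
Proof. unfold gsum; rewrite <- sum1_add; apply sum1_ext; intro; apply sum1_add. Qed.

Lemma gsum_scal M c f : gsum M (fun i j => c * f i j) = c * gsum M f.
Proof. unfold gsum; rewrite <- sum1_scal; apply sum1_ext; intro; apply sum1_scal. Qed.

Lemma gsum_sub M f g : gsum M (fun i j => f i j - g i j) = gsum M f - gsum M g.
Proof.
  replace (gsum M f - gsum M g) with (gsum M f + -1 * gsum M g) by ring.
  rewrite <- (gsum_scal M (-1) g), <- gsum_add.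
  apply gsum_ext; intros; ring.
Qed.

Lemma periodic_gsub M (v w : grid) :
  periodic M v -> periodic M w -> periodic M (gsub v w).
Proof. intros Hv Hw i j; unfold gsub; destruct (Hv i j), (Hw i j); split; congruence. Qed.

Lemma gsum_shift_i M (g : grid) :
  periodic M g -> gsum M (fun i j => g (i + 1)%Z j) = gsum M g.
Proof.
  intros Hg; unfold gsum.
  transitivity (sum1 M (fun i => sum1 M (fun j => g (Z.of_nat (S i)) (Z.of_nat j)))).
  { apply sum1_ext; intro i; apply sum1_ext; intro j; f_equal; lia. }
  rewrite (sum1_shift M (fun i => sum1 M (fun j => g (Z.of_nat i) (Z.of_nat j)))).
  replace (Z.of_nat (S M)) with (Z.of_nat 1 + Z.of_nat M)%Z by lia.
  rewrite (sum1_ext M (fun j => g (Z.of_nat 1 + Z.of_nat M)%Z (Z.of_nat j))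
                     (fun j => g (Z.of_nat 1) (Z.of_nat j))) by (intro; apply Hg).
  lra.
Qed.

Lemma gsum_shift_j M (g : grid) :
  periodic M g -> gsum M (fun i j => g i (j + 1)%Z) = gsum M g.
Proof.
  intros Hg; unfold gsum; apply sum1_ext; intro i.
  transitivity (sum1 M (fun j => g (Z.of_nat i) (Z.of_nat (S j)))).
  { apply sum1_ext; intro j; f_equal; lia. }
  rewrite (sum1_shift M (fun j => g (Z.of_nat i) (Z.of_nat j))).
  replace (Z.of_nat (S M)) with (Z.of_nat 1 + Z.of_nat M)%Z by lia.
  rewrite (proj2 (Hg _ _)); lra.
Qed.

Definition grad_inner (h : R) (M : nat) (v w : grid) : R :=
  h ^ 2 * gsum M (fun i j =>
    (v (i + 1)%Z j - v i j) / h * ((w (i + 1)%Z j - w i j) / h)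
    + (v i (j + 1)%Z - v i j) / h * ((w i (j + 1)%Z - w i j) / h)).

Lemma grad_norm2_polarization h M (v w : grid) :
  grad_norm2 h M v - grad_norm2 h M w + grad_norm2 h M (gsub v w)
  = 2 * grad_inner h M v (gsub v w).
Proof.
  unfold grad_norm2, grad_inner, gsub.
  rewrite <- Rmult_minus_distr_l, <- Rmult_plus_distr_l, <- gsum_sub, <- gsum_add.
  rewrite <- Rmult_assoc, (Rmult_comm 2), Rmult_assoc, <- (gsum_scal M 2).
  f_equal; apply gsum_ext; intros; unfold Rdiv; ring.
Qed.

Lemma ginner_lap_h M h (a d : grid) :
  periodic M a -> periodic M d -> h <> 0 ->
  ginner h M (lap_h h a) d = - grad_inner h M a d.
Proof.
  intros Pa Pd Hh.
  assert (Hx : gsum M (fun i j => (a i j - a (i - 1)%Z j) * d i j)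
             = gsum M (fun i j => (a (i + 1)%Z j - a i j) * d (i + 1)%Z j)).
  { rewrite <- (gsum_shift_i M (fun i j => (a i j - a (i - 1)%Z j) * d i j)).
    - apply gsum_ext; intros i j; replace (i + 1 - 1)%Z with i by lia; reflexivity.
    - intros i j; replace (i + Z.of_nat M - 1)%Z with (i - 1 + Z.of_nat M)%Z by lia.
      destruct (Pa i j), (Pa (i - 1)%Z j), (Pd i j); split; congruence. }
  assert (Hy : gsum M (fun i j => (a i j - a i (j - 1)%Z) * d i j)
             = gsum M (fun i j => (a i (j + 1)%Z - a i j) * d i (j + 1)%Z)).
  { rewrite <- (gsum_shift_j M (fun i j => (a i j - a i (j - 1)%Z) * d i j)).
    - apply gsum_ext; intros i j; replace (j + 1 - 1)%Z with j by lia; reflexivity.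
    - intros i j; replace (j + Z.of_nat M - 1)%Z with (j - 1 + Z.of_nat M)%Z by lia.
      destruct (Pa i j), (Pa i (j - 1)%Z), (Pd i j); split; congruence. }
  transitivity (gsum M (fun i j =>
      (a (i + 1)%Z j - a i j) * d i j - (a i j - a (i - 1)%Z j) * d i j
      + ((a i (j + 1)%Z - a i j) * d i j - (a i j - a i (j - 1)%Z) * d i j))).
  { unfold ginner; rewrite <- (gsum_scal M (h ^ 2)).
    apply gsum_ext; intros; unfold lap_h; field; exact Hh. }
  rewrite gsum_add, !gsum_sub, Hx, Hy, <- !gsum_sub, <- gsum_add.
  unfold grad_inner; rewrite Ropp_mult_distr_l, <- gsum_scal.
  apply gsum_ext; intros; field; exact Hh.
Qed.

Lemma modified_energy_identity h M eps m tau W (a b D g : grid) (Ra Rb : R) :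
  periodic M a -> periodic M b -> h <> 0 -> tau <> 0 -> m <> 0 ->
  (forall i j, D i j = m * (eps ^ 2 * lap_h h a i j - W * g i j)) ->
  (Ra - Rb) / tau = W * ginner h M g (fun i j => (a i j - b i j) / tau) ->
  Eh eps h M a Ra - Eh eps h M b Rb
  = - (eps ^ 2 / 2) * grad_norm2 h M (gsub a b) - / m * ginner h M D (gsub a b).
Proof.
  intros Pa Pb Hh Htau Hm HD HR.
  assert (Hdiff : Ra - Rb = eps ^ 2 * ginner h M (lap_h h a) (gsub a b)
                            - / m * ginner h M D (gsub a b)).
  { replace (Ra - Rb) with (tau * ((Ra - Rb) / tau)) by (field; exact Htau).
    rewrite HR; unfold ginner, gsub.
    rewrite <- !gsum_scal, <- gsum_sub.
    apply gsum_ext; intros i j; rewrite HD; field; auto. }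
  rewrite ginner_lap_h in Hdiff by (auto using periodic_gsub).
  pose proof (grad_norm2_polarization h M a b) as Hpol.
  unfold Eh.
  replace Ra with (Rb + (Ra - Rb)) by ring.
  replace (grad_norm2 h M a)
    with (2 * grad_inner h M a (gsub a b) - grad_norm2 h M (gsub a b) + grad_norm2 h M b)
    by lra.
  rewrite Hdiff; field; exact Hm.
Qed.

Theorem mainTheorem5
  (md : model) (beta : R)
  (L eps m alpha kappa : R) (M N : nat) (T : R) (t : nat -> R)
  (V : R -> R) (K1 K2 : R)
  (phi phihat : nat -> grid) (Rs : nat -> R) :
  model_ok md -> is_beta md beta ->
  0 < L -> (0 < M)%nat -> 0 < eps -> 0 < m -> 0 < alpha < 1 -> 0 <= kappa ->
  aux_ok V K1 K2 ->
  t 0%nat = 0 -> (forall k, (1 <= k <= N)%nat -> t (k - 1)%nat < t k) -> t N = T ->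
  (forall x, - beta <= x <= beta -> Rabs (Derive (fnl md) x) <= kappa) ->
  periodic M (phi 0%nat) -> in_Vbeta M beta (phi 0%nat) ->
  tau t 1 < Rpower (kappa * m * Gamma (2 - alpha)) (- / alpha) ->
  (let h := L / INR M in
   (periodic M (phihat 1%nat) /\ in_Vbeta M beta (phihat 1%nat) /\
    forall i j, Acoef alpha t 1 1 * (phihat 1%nat i j - phi 0%nat i j)
                = m * (eps ^ 2 * lap_h h (phihat 1%nat) i j + fnl md (phihat 1%nat i j))) /\
   (forall n, (2 <= n <= N)%nat -> phihat n = predict beta t phi n) /\
   (forall n, (1 <= n <= N)%nat ->
      let Vn := V (g_h md h M (phihat n) (Rs (n - 1)%nat)) in
      periodic M (phi n) /\
      (forall i j, DL1 alpha t phi n i j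
         = m * (eps ^ 2 * lap_h h (phi n) i j + Vn * fnl md (phihat n i j)
                - kappa * Vn * (phi n i j - phihat n i j))) /\
      (Rs n - Rs (n - 1)%nat) / tau t n
        = Vn * ginner h M
                 (fun i j => - fnl md (phihat n i j) + kappa * (phi n i j - phihat n i j))
                 (fun i j => (phi n i j - phi (n - 1)%nat i j) / tau t n))) ->
  forall k, (1 <= k <= N)%nat ->
    let h := L / INR M in
    Eh eps h M (phi k) (Rs k) - Eh eps h M (phi (k - 1)%nat) (Rs (k - 1)%nat)
    <= - (eps ^ 2 / 2) * grad_norm2 h M (nabla_tau phi k)
       - / m * ginner h M (DL1 alpha t phi k) (nabla_tau phi k).
Proof.
  intros _ _ HL HM _ Hm _ _ _ _ Ht _ _ Hp0 _ _ [_ [_ Hscheme]] k Hk h.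
  destruct (Hscheme k Hk) as [Pk [HD HR]].
  assert (Pk1 : periodic M (phi (k - 1)%nat)).
  { destruct (Nat.eq_dec k 1) as [-> | Hk1]; [exact Hp0 |].
    apply (Hscheme (k - 1)%nat); lia. }
  assert (Hh : h <> 0).
  { apply Rgt_not_eq, Rdiv_lt_0_compat; [exact HL | apply lt_0_INR; lia]. }
  assert (Htau : tau t k <> 0) by (specialize (Ht k Hk); unfold tau; lra).
  refine (Req_le _ _ (modified_energy_identity _ _ _ _ _ _ _ _ _ _ _ _
                        Pk Pk1 Hh Htau (Rgt_not_eq _ _ Hm) _ HR)).
  intros i j; rewrite HD; unfold h; ring.
Qed.
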